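(* Let $G$ be a trigraph and let $\Gamma\subseteq\operatorname{Aut}(G)$ be a solvable group. Then there exists a partial contraction sequence of $G$ of width at most $4\Delta(G)$ whose last partition is the partition of $V(G)$ into $\Gamma$-orbits, i.e., which contracts $G$ to $G/\Gamma$.
   Context: A trigraph is a finite simple graph whose edges are each colored red or black. $\operatorname{Aut}(G)$ is the automorphism group of the underlying simple graph of $G$ (automorphisms need not preserve colors); $\Delta(G)$ is the maximum degree. The red degree of a vertex is the number of red edges incident to it. For a partition $\mathcal{P}$ of $V(G)$, the quotient trigraph $G/\mathcal{P}$ has vertex set $\mathcal{P}$; two distinct parts $U,W$ are joined by a black edge if every pair $\{u,w\}$ with $u\in U,w\in W$ is a black edge of $G$, are non-adjacent if no such pair is an edge, and are joined by a red edge otherwise; $G/\Gamma$ is the quotient by the partition into $\Gamma$-orbits. A partial contraction sequence of an $n$-vertex trigraph $G$ is a sequence $\mathcal{P}_n,\dots,\mathcal{P}_i$ of partitions of $V(G)$ where $\mathcal{P}_n$ is the partition into singletons and each $\mathcal{P}_j$ arises from $\mathcal{P}_{j+1}$ by merging two parts; its width is the maximum red degree over all $G/\mathcal{P}_j$ in the sequence. *)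

From HB Require Import structures.
From mathcomp Require Import all_boot all_fingroup all_solvable.
Set Implicit Arguments. Unset Strict Implicit. Unset Printing Implicit Defensive.

(* A trigraph on vertex type V: a finite simple graph (symmetric, irreflexive
   edge relation) whose edges are colored red or black; [tred] marks the red
   edges (only meaningful on edges). *)
Record trigraph (V : finType) := Trigraph {
  tedge : rel V;
  tred : rel V;
  tedge_sym : symmetric tedge;
  tedge_irr : irreflexive tedge;
  tred_sub : subrel tred tedge;
  tred_sym : symmetric tred }.

Section Trigraphs.
Variables (V : finType) (G : trigraph V).

Definition tblack (u w : V) : bool := tedge G u w && ~~ tred G u w.

(* automorphism of the underlying simple graph (colors need not be preserved) *)
Definition is_aut (g : {perm V}) : bool :=
  [forall x, forall y, tedge G (g x) (g y) == tedge G x y].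

Definition aut_subgroup (Gam : {set {perm V}}) : bool :=
  [forall g in Gam, is_aut g].

Definition degree (v : V) : nat := #|[set w | tedge G v w]|.

Definition maxdeg : nat := \max_(v : V) degree v.

(* quotient trigraph G/P: adjacency types between two distinct parts *)
Definition qblack (U W : {set V}) : bool :=
  [forall u in U, forall w in W, tblack u w].
Definition qnonadj (U W : {set V}) : bool :=
  [forall u in U, forall w in W, ~~ tedge G u w].
Definition qred (U W : {set V}) : bool := ~~ qblack U W && ~~ qnonadj U W.

Definition qred_degree (P : {set {set V}}) (U : {set V}) : nat :=
  #|[set W in P | (W != U) && qred U W]|.

Definition qmax_red_degree (P : {set {set V}}) : nat :=
  \max_(U in P) qred_degree P U.

End Trigraphs.

Definition singletons_partition (V : finType) : {set {set V}} :=
  [set [set v] | v : V].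

Definition merge_step (V : finType) (P Q : {set {set V}}) : Prop :=
  exists A B, [/\ A \in P, B \in P, A != B & Q = (P :\ A :\ B) :|: [set A :|: B]].

Definition gamma_orbit_partition (V : finType) (Gam : {set {perm V}}) : {set {set V}} :=
  [set orbit 'P Gam x | x : V].

(* A partial contraction sequence P_n, ..., P_i is represented by the list
   s = [:: P_{n-1}; ...; P_i] following P_n = singletons_partition. *)
Fixpoint contraction_path (V : finType) (P : {set {set V}}) (s : seq {set {set V}}) : Prop :=
  match s with
  | [::] => True
  | Q :: s' => merge_step P Q /\ contraction_path Q s'
  end.

From mathcomp Require Import all_boot all_fingroup all_solvable zify.
Set Implicit Arguments. Unset Strict Implicit. Unset Printing Implicit Defensive.

(* Induct along a subnormal series of the solvable group with cyclic factors.
   If M is normal in K = <g>M, then g permutes the M-orbits inside each K-orbit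
   cyclically, so these M-orbits can be numbered by their position in the cycle
   through a fixed anchor orbit.  Contract M-orbits to K-orbits in rounds, round k
   merging blocks of 2^k consecutive positions in pairs.  Translating an edge by
   an element of K moves its first end to the anchor and shifts positions by a
   constant, so a part lying in a block of 2^(k+1) positions has its red neighbours
   among at most four blocks of 2^k positions for each of the at most Delta edges
   at the anchor: every intermediate quotient has red degree at most 4 Delta. *)

Section Contractions.
Variables (V : finType) (G : trigraph V) (w : nat).

Definition contractible (P Q : {set {set V}}) : Prop :=
  exists s, [/\ contraction_path P s, last P s = Q &
    forall R, R \in P :: s -> qmax_red_degree G R <= w].

Lemma contractible_refl P : qmax_red_degree G P <= w -> contractible P P.
Proof. by move=> Pw; exists [::]; split => // R; rewrite inE => /eqP ->. Qed.

Lemma contractible_merge P Q R : qmax_red_degree G P <= w -> merge_step P Q ->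
  contractible Q R -> contractible P R.
Proof.
move=> Pw PQ [s [Qs sR sw]]; exists (Q :: s); split => // S.
by rewrite inE => /predU1P [-> //|]; apply: sw.
Qed.

Lemma contractible_trans P Q R : contractible P Q -> contractible Q R -> contractible P R.
Proof.
move=> [s [Ps sQ sw]] [t [Qt tR tw]]; exists (s ++ t); split.
- elim: s P Ps sQ {sw} => [|Q' s IH] P /=; first by move=> _ ->.
  by case=> PQ' Q's sQ; split; last exact: IH.
- by rewrite last_cat sQ.
- move=> S; rewrite -cat_cons mem_cat => /orP [/sw //|St].
  by apply: tw; rewrite inE St orbT.
Qed.
End Contractions.

Lemma qred_edge (V : finType) (G : trigraph V) (U W : {set V}) :
  qred G U W -> exists u w, [/\ u \in U, w \in W & tedge G u w].
Proof.
case/andP => _ /forall_inPn [u uU /forall_inPn [w wW /negbNE uw]].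
by exists u, w.
Qed.

Lemma card_merge_step (V : finType) (P Q : {set {set V}}) : merge_step P Q -> #|Q| < #|P|.
Proof.
case=> A [B [PA PB nAB ->]].
rewrite (cardsD1 A P) PA (cardsD1 B (P :\ A)) !inE eq_sym nAB PB.
by have := (leq_card_setU (P :\ A :\ B) [set A :|: B]).1; rewrite cards1; lia.
Qed.

Section Fibers.
Variables (V : finType) (T : eqType).
Implicit Types (k : V -> T) (u v x : V).

Definition fiber k x : {set V} := [set y | k y == k x].

Definition fiber_partition k : {set {set V}} := [set fiber k x | x : V].

Lemma fiber_id k x : x \in fiber k x.
Proof. by rewrite inE. Qed.

Lemma eq_fiber k u v : (fiber k u == fiber k v) = (k u == k v).
Proof.
apply/eqP/eqP => [e|e]; last by apply/setP => y; rewrite !inE e.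
by have := fiber_id k u; rewrite e inE => /eqP.
Qed.

Definition relabel k (a b : T) v : T := if k v == b then a else k v.

Section Relabel.
Variables (k : V -> T) (u v : V).
Local Notation k' := (relabel k (k u) (k v)).

Lemma fiber_relabel_merged x : (k x == k u) || (k x == k v) ->
  fiber k' x = fiber k u :|: fiber k v.
Proof.
move=> hx; have k'x : k' x = k u.
  by rewrite /relabel; case: eqP => // nv; case/orP: hx => /eqP // /nv.
apply/setP => y; rewrite !inE k'x /relabel.
by case: (k y =P k v) => [->|_]; rewrite ?eqxx ?orbT ?orbF.
Qed.

Lemma fiber_relabel_other x : k x != k u -> k x != k v -> fiber k' x = fiber k x.
Proof.
move=> nxu nxv; apply/setP => y; rewrite !inE /relabel (negbTE nxv).
by case: (k y =P k v) => [->|//]; rewrite eq_sym (negbTE nxu) eq_sym (negbTE nxv).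
Qed.

Lemma merge_step_relabel : k u != k v ->
  merge_step (fiber_partition k) (fiber_partition k').
Proof.
move=> nuv; exists (fiber k u), (fiber k v); split; rewrite ?imset_f ?eq_fiber //.
apply/setP => C; rewrite !inE; apply/imsetP/idP => [[x _ ->]|].
- case: (boolP ((k x == k u) || (k x == k v))) => [hx|].
    by rewrite fiber_relabel_merged // eqxx orbT.
  rewrite negb_or => /andP [nxu nxv].
  by rewrite fiber_relabel_other // !eq_fiber nxu nxv imset_f.
- case/orP => [/and3P [nv nu /imsetP [x _ eC]]|/eqP ->].
  + rewrite {C}eC !eq_fiber in nv nu *.
    by exists x; rewrite // fiber_relabel_other.
  + by exists u; rewrite // fiber_relabel_merged ?eqxx.
Qed.

End Relabel.
End Fibers.

Definition refines (V : finType) (T1 T2 : eqType) (k1 : V -> T1) (k2 : V -> T2) : Prop :=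
  forall u v, k1 u = k1 v -> k2 u = k2 v.

Lemma eq_fiber_partition (V : finType) (T1 T2 : eqType) (k1 : V -> T1) (k2 : V -> T2) :
  refines k1 k2 -> refines k2 k1 -> fiber_partition k1 = fiber_partition k2.
Proof.
move=> k12 k21; apply: eq_imset => x; apply/setP => y; rewrite !inE.
by apply/eqP/eqP => [/k12|/k21].
Qed.

Section Coarsening.
Variables (V : finType) (G : trigraph V) (w : nat) (T1 T2 : eqType).
Variables (kf : V -> T1) (kg : V -> T2).
Hypothesis kf_kg : refines kf kg.
Hypothesis narrow : forall k : V -> T1,
  refines kf k -> refines k kg -> qmax_red_degree G (fiber_partition k) <= w.

Lemma contractible_coarsen : contractible G w (fiber_partition kf) (fiber_partition kg).
Proof.
suff: forall k : V -> T1, refines kf k -> refines k kg ->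
    contractible G w (fiber_partition k) (fiber_partition kg) by apply.
move=> k; have [n] := ubnP #|fiber_partition k|; elim: n k => // n IH k lt_n kf_k k_kg.
case: (pickP [pred p : V * V | (kg p.1 == kg p.2) && (k p.1 != k p.2)]).
- move=> [u v] /andP [/eqP guv nuv] /=; set k' := relabel k (k u) (k v).
  have step := merge_step_relabel nuv.
  have lt_k' := leq_trans (card_merge_step step) lt_n.
  apply: contractible_merge (narrow kf_k k_kg) step (IH k' lt_k' _ _).
  + by move=> x y /kf_k; rewrite /k' /relabel => ->.
  + pose r x := if k x == k v then u else x.
    have k'E x : k' x = k (r x) by rewrite /k' /relabel /r; case: eqP.
    have kgE x : kg x = kg (r x).
      by rewrite /r; case: eqP => // /k_kg ->; rewrite guv.
    by move=> x y; rewrite kgE (kgE y) !k'E => /k_kg.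
- move=> coarsest; suff <- : fiber_partition k = fiber_partition kg.
    exact: contractible_refl (narrow kf_k k_kg).
  apply: eq_fiber_partition => // x y gxy.
  by move: (coarsest (x, y)); rewrite /= gxy eqxx /= => /negbFE /eqP.
Qed.
End Coarsening.

(* For e < 2d, (x + e) mod m lies in one of the listed blocks [c d, (c+1) d):
   the interval from x meets up to three blocks before wrapping around m and
   blocks 0 and 1 after, but it reaches block 1 only when its part before m
   meets at most two blocks. *)
Definition window (d m x : nat) : seq nat :=
  [:: 0; x %/ d; (x %/ d).+1; if m <= x + d then 1 else (x %/ d).+2].

Lemma modnD_divn_window d m x e : 0 < d -> x < m -> e < 2 * d ->
  ((x + e) %% m) %/ d \in window d m x.
Proof.
move=> d_gt0 xm e2d; rewrite !inE.
have x_lt : x < (x %/ d).+1 * d by rewrite ltn_ceil.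
set j := (x + e) %% m.
have below k : j < k * d -> j %/ d < k by rewrite ltn_divLR.
have [lt|ge] := ltnP (x + e) m.
- have je : j = x + e by rewrite /j modn_small.
  have above : x %/ d <= j %/ d by rewrite leq_div2r // je leq_addr.
  have := below (x %/ d).+2; have := below (x %/ d).+3.
  (* lia does not reason about division by the variable d: the quotients are
     generalized once the needed bounds are in place. *)
  move: above x_lt; rewrite je; set J := (x + e) %/ d; set q := x %/ d.
  by clearbody J q; case: ifP; lia.
- have jle : j <= x + e - m by rewrite /j -{1}(subnK ge) modnDr leq_mod.
  have := below 1; have := below 2.
  by move: jle; set J := j %/ d; clearbody J j; case: ifP; lia.
Qed.

Section CyclicExtension.
Variables (V : finType) (G : trigraph V) (H K : {group {perm V}}) (g : {perm V}).
Hypotheses (autK : aut_subgroup G K) (nHg : g \in 'N(H)%g) (defK : (<[g]> * H)%g = K).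

Local Notation Horbit x := (orbit 'P H x).
Local Notation Korbit x := (orbit 'P K x).

Lemma sub_HK : H \subset K.
Proof. by rewrite -defK mulG_subr. Qed.

Lemma tedge_aut k x y : k \in K -> tedge G (k x) (k y) = tedge G x y.
Proof.
by move=> kK; move/forall_inP: autK => /(_ k kK) /forallP /(_ x) /forallP /(_ y) /eqP.
Qed.

Definition gshift (A : {set V}) : {set V} := g @: A.

Lemma gshift_inj : injective gshift.
Proof. exact/imset_inj/perm_inj. Qed.

Lemma gshift_orbit x : gshift (Horbit x) = Horbit (g x).
Proof.
apply/setP => y; rewrite -[y](permKV g) mem_imset; last exact: perm_inj.
by rewrite -{2}(normP nHg) -!apermE orbit_conjsg.
Qed.

Lemma iter_gshift i x : iter i gshift (Horbit x) = Horbit ((g ^+ i)%g x).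
Proof.
elim: i => [|i IH]; first by rewrite expg0 perm1.
by rewrite iterS IH gshift_orbit expgSr permM.
Qed.

Definition anchor v : V := odflt v [pick u in Korbit v].

Lemma anchor_in v : anchor v \in Korbit v.
Proof. by rewrite /anchor; case: pickP => [u //|/(_ v)]; rewrite orbit_refl. Qed.

Lemma eq_anchor u v : (anchor u == anchor v) = (Korbit u == Korbit v).
Proof.
apply/eqP/eqP => e.
  by move/orbit_eqP: (anchor_in u) => <-; move/orbit_eqP: (anchor_in v) => <-; rewrite e.
by rewrite /anchor e; case: pickP => // /(_ v); rewrite orbit_refl.
Qed.

Lemma fconnect_anchor v : fconnect gshift (Horbit (anchor v)) (Horbit v).
Proof.
have /orbitP [k] : v \in Korbit (anchor v) by rewrite orbit_sym anchor_in.
rewrite -defK => /mulsgP [x h /cycleP [i ->] hH ->] vE.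
rewrite -[X in fconnect _ _ (Horbit X)]vE actM orbit_act //=.
by rewrite -iter_gshift fconnect_iter.
Qed.

Definition period v := fingraph.order gshift (Horbit (anchor v)).
Definition pos v := findex gshift (Horbit (anchor v)) (Horbit v).

Lemma pos_lt v : pos v < period v.
Proof. exact: findex_max (fconnect_anchor v). Qed.

Lemma iter_pos v : iter (pos v) gshift (Horbit (anchor v)) = Horbit v.
Proof. exact: iter_findex (fconnect_anchor v). Qed.

Lemma pos_iter v i : iter i gshift (Horbit (anchor v)) = Horbit v -> pos v = i %% period v.
Proof.
have p_gt0 : 0 < period v := fingraph.order_gt0 _ _.
have fix_p : iter (period v) gshift (Horbit (anchor v)) = Horbit (anchor v).
  exact: (iter_order gshift_inj).
rewrite {1}(divn_eq i (period v)) addnC iterD iterM (iter_fix _ fix_p).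
by move=> e; rewrite /pos -e findex_iter // ltn_pmod.
Qed.

Lemma Horbit_Korbit x y : y \in Horbit x -> Korbit y = Korbit x.
Proof.
case/orbitP => h hH <-; apply/orbit_eqP.
exact: mem_orbit (subsetP sub_HK h hH).
Qed.

Lemma edge_from_anchor u w : tedge G u w ->
  exists2 n, tedge G (anchor u) n &
    anchor w = anchor n /\ pos w = (pos u + pos n) %% period n.
Proof.
move=> uw; set a := anchor u; set i := pos u.
have /orbitP [h hH ua] : u \in Horbit ((g ^+ i)%g a).
  by rewrite -iter_gshift iter_pos orbit_refl.
set k := (g ^+ i * h)%g.
have kK : k \in K by rewrite -defK mem_mulg ?mem_cycle.
have ka : k a = u by rewrite permM.
exists (k^-1 w)%g; first by rewrite -(tedge_aut _ _ kK) ka permKV.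
set n := (k^-1 w)%g; have wn : w = k n by rewrite permKV.
have an : anchor w = anchor n.
  by apply/eqP; rewrite eq_anchor wn; apply/eqP/orbit_eqP; exact: (mem_orbit 'P n kK).
have -> : period n = period w by rewrite /period an.
split => //; apply: pos_iter.
rewrite an iterD iter_pos iter_gshift wn permM.
by apply/esym/orbit_eqP; exact: (mem_orbit 'P _ hH).
Qed.

Definition stage k v : V * nat := (anchor v, pos v %/ 2 ^ k).

Lemma refines_stageS k : refines (stage k) (stage k.+1).
Proof. by move=> u v [au iu]; rewrite /stage au expnSr !divnMA iu. Qed.

Lemma fiber_stage0 x : fiber (stage 0) x = Horbit x.
Proof.
apply/setP => y; rewrite inE /stage !divn1 xpair_eqE.
apply/andP/idP => [[/eqP ay /eqP iy]|yx].
  by rewrite -(iter_pos x) -ay -iy iter_pos orbit_refl.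
have ay : anchor y = anchor x by apply/eqP; rewrite eq_anchor (Horbit_Korbit yx).
by rewrite /pos ay; move/orbit_eqP: yx => ->; rewrite !eqxx.
Qed.

Lemma pos_lt_pow v : pos v < 2 ^ #|{set V}|.
Proof. exact: leq_trans (pos_lt v) (leq_trans (max_card _) (ltnW (ltn_expl _ _))). Qed.

Lemma fiber_stage_top x : fiber (stage #|{set V}|) x = Korbit x.
Proof.
apply/setP => y; rewrite inE /stage !divn_small ?pos_lt_pow //.
rewrite xpair_eqE eqxx andbT eq_anchor.
by apply/eqP/idP => [<-|/orbit_eqP //]; rewrite orbit_refl.
Qed.

Section BetweenStages.
Variables (k : nat) (T : eqType) (kap : V -> T).
Hypotheses (stage_kap : refines (stage k) kap) (kap_stage : refines kap (stage k.+1)).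

Let shifted_window x n :=
  window (2 ^ k) (period n) ((pos x %/ 2 ^ k.+1 * 2 ^ k.+1 + pos n) %% period n).

Lemma red_neighbour_window x W : W \in fiber_partition kap -> qred G (fiber kap x) W ->
  exists n, exists2 w, [/\ tedge G (anchor x) n, anchor w = anchor n &
    pos w %/ 2 ^ k \in shifted_window x n] & W = fiber kap w.
Proof.
case/imsetP => y _ -> /qred_edge [u [w [ux wy uw]]]; rewrite !inE in ux wy.
have [n un [anw pw]] := edge_from_anchor uw.
have [au bu] : anchor u = anchor x /\ pos u %/ 2 ^ k.+1 = pos x %/ 2 ^ k.+1.
  by case: (kap_stage (eqP ux)).
exists n, w; last by apply/setP => z; rewrite !inE (eqP wy).
split; rewrite -?au // pw.
have -> : pos u + pos n = pos x %/ 2 ^ k.+1 * 2 ^ k.+1 + pos n + pos u %% 2 ^ k.+1.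
  by rewrite {1}(divn_eq (pos u) (2 ^ k.+1)) bu; lia.
rewrite -modnDml; apply: modnD_divn_window.
- by rewrite expn_gt0.
- by rewrite ltn_pmod // fingraph.order_gt0.
- by rewrite -expnS ltn_pmod // expn_gt0.
Qed.

Lemma qmax_red_degree_between_stages :
  qmax_red_degree G (fiber_partition kap) <= 4 * maxdeg G.
Proof.
apply/bigmax_leqP => U /imsetP [x _ ->].
pose F n c := if [pick y | stage k y == (anchor n, c)] is Some y then fiber kap y else set0.
pose L := [seq F n c | n <- enum [set n | tedge G (anchor x) n], c <- shifted_window x n].
have red_in_L :
    [set W in fiber_partition kap | (W != fiber kap x) && qred G (fiber kap x) W] \subset L.
  apply/subsetP => W; rewrite inE => /andP [PW /andP [_ /(red_neighbour_window PW)]].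
  case=> n [w [xn anw wc] ->]; apply/allpairsPdep; exists n, (pos w %/ 2 ^ k).
  split => //; first by rewrite mem_enum inE.
  rewrite /F; case: pickP => [y /eqP yw|/(_ w)]; last by rewrite /stage anw eqxx.
  by apply/setP => z; rewrite !inE (@stage_kap y w) // yw /stage anw.
apply: leq_trans (subset_leq_card red_in_L) _; apply: leq_trans (card_size _) _.
rewrite size_allpairs_dep.
have -> : forall s, sumn [seq size (shifted_window x n) | n <- s] = 4 * size s.
  by elim => //= ? ? ->; rewrite mulnS.
by rewrite -cardE leq_mul2l (@leq_bigmax _ (degree G) (anchor x)) orbT.
Qed.

End BetweenStages.

Lemma contractible_stages D :
  contractible G (4 * maxdeg G) (fiber_partition (stage 0)) (fiber_partition (stage D)).
Proof.
elim: D => [|D IH].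
  exact/contractible_refl/qmax_red_degree_between_stages/(@refines_stageS 0).
apply: contractible_trans IH _; apply: contractible_coarsen (@refines_stageS D) _.
exact: qmax_red_degree_between_stages.
Qed.

Lemma contractible_orbit_partitions :
  contractible G (4 * maxdeg G) (gamma_orbit_partition H) (gamma_orbit_partition K).
Proof.
have <- : fiber_partition (stage 0) = gamma_orbit_partition H.
  by apply: eq_imset => x; rewrite fiber_stage0.
have <- : fiber_partition (stage #|{set V}|) = gamma_orbit_partition K.
  by apply: eq_imset => x; rewrite fiber_stage_top.
exact: contractible_stages.
Qed.

End CyclicExtension.

Lemma solvable_cyclic_extension (gT : finGroupType) (L : {group gT}) :
  solvable L -> (L :!=: 1)%g ->
  exists (M : {group gT}) (g : gT), [/\ M \proper L, g \in 'N(M) & <[g]> * M = L]%g.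
Proof.
move=> solL ntL; have der1L := sol_der1_proper solL (subxx _) ntL.
have [eqL|[M maxM sM]] := maximal_exists (proper_sub der1L).
  by rewrite eqL properxx in der1L.
have prM := maxgroupp maxM; have sML := proper_sub prM.
have [_ [g gL gM]] := properP prM.
have nMg : g \in 'N(M)%g := subsetP (normal_norm (sub_der1_normal sM sML)) g gL.
exists M, g; split => //; rewrite -norm_joinEl ?cycle_subG //.
apply/eqP; rewrite eqEproper join_subG cycle_subG gL sML /=.
apply: contraNN gM => prJ; rewrite -((maxgroupP maxM).2 _ prJ (joing_subr _ _)) /=.
by rewrite (subsetP (joing_subl _ _)) ?cycle_id.
Qed.

Lemma aut_subgroupS (V : finType) (G : trigraph V) (A B : {set {perm V}}) :
  A \subset B -> aut_subgroup G B -> aut_subgroup G A.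
Proof. by move=> sAB /forall_inP autB; apply/forall_inP => a /(subsetP sAB) /autB. Qed.

Lemma gamma_orbit_partition1 (V : finType) :
  gamma_orbit_partition [1 {perm V}]%G = singletons_partition V.
Proof.
apply: eq_imset => x; apply/setP => y; rewrite inE.
apply/orbitP/eqP => [[a /set1P -> <-]|->]; first by rewrite act1.
by exists 1%g; rewrite ?group1 ?act1.
Qed.

Theorem solvable_contractible (V : finType) (G : trigraph V) (L : {group {perm V}}) :
  aut_subgroup G L -> solvable L ->
  contractible G (4 * maxdeg G) (singletons_partition V) (gamma_orbit_partition L).
Proof.
have [n] := ubnP #|L|; elim: n L => // n IH L ltLn autL solL.
have [L1|ntL] := eqVneq L 1%G.
  rewrite L1 -{1}gamma_orbit_partition1; rewrite L1 in autL.
  by apply: contractible_orbit_partitions autL (group1 _) _; rewrite cycle1 mul1g.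
have [M [g [prM nMg defL]]] := solvable_cyclic_extension solL ntL.
have sML := proper_sub prM.
apply: contractible_trans (contractible_orbit_partitions autL nMg defL).
apply: IH (aut_subgroupS sML autL) (solvableS sML solL).
exact: leq_trans (proper_card prM) ltLn.
Qed.

Theorem mainTheorem16 (V : finType) (G : trigraph V) (Gam : {group {perm V}}) :
  aut_subgroup G Gam -> solvable Gam ->
  exists s : seq {set {set V}},
    [/\ contraction_path (singletons_partition V) s,
        last (singletons_partition V) s = gamma_orbit_partition Gam
      & forall P, P \in singletons_partition V :: s ->
          qmax_red_degree G P <= 4 * maxdeg G].
Proof. exact: solvable_contractible. Qed.
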